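(* Let $\Gamma$ be a strongly regular graph. Then $E(\Gamma)=E(\bar\Gamma)$ and $\Gamma$, $\bar\Gamma$ are not isospectral if and only if $\Gamma$ has $OA(n,m)$ parameters, i.e. parameters $(n^2, m(n-1), m^2-3m+n, m(m-1))$, for some positive integers $n,m$ with $m\neq n+1$ and $m\neq \tfrac{n+1}{2}$.
   Context: A strongly regular graph with parameters $(n,k,e,d)$ is a $k$-regular simple graph on $n$ vertices, neither complete nor edgeless, in which adjacent vertices have $e$ common neighbours and distinct non-adjacent vertices have $d$ common neighbours. $\bar\Gamma$ is the complement. The energy $E$ is the sum of the absolute values of the adjacency eigenvalues (with multiplicity); isospectral means equal adjacency spectra with multiplicities. *)

From HB Require Import structures.
From mathcomp Require Import all_boot all_order all_algebra all_field.
Set Implicit Arguments. Unset Strict Implicit. Unset Printing Implicit Defensive.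
Import Order.TTheory GRing.Theory Num.Theory.
Local Open Scope ring_scope.

Definition simple_graph N (adj : rel 'I_N) : Prop :=
  (forall u v, adj u v = adj v u) /\ (forall u, ~~ adj u u).

Definition complement N (adj : rel 'I_N) : rel 'I_N :=
  fun u v => (u != v) && ~~ adj u v.

Definition common_nbrs N (adj : rel 'I_N) (u v : 'I_N) : nat :=
  #|[set w | adj u w && adj v w]|.

Definition srg N (adj : rel 'I_N) (k e d : nat) : Prop :=
  simple_graph adj /\
  [/\ (forall u, #|[set w | adj u w]| = k),
      (exists u v, u != v /\ ~~ adj u v),
      (exists u v, adj u v),
      (forall u v, adj u v -> common_nbrs adj u v = e)
    & (forall u v, u != v -> ~~ adj u v -> common_nbrs adj u v = d)].

Definition adjmx N (adj : rel 'I_N) : 'M[algC]_N :=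
  \matrix_(i, j) (adj i j)%:R.

(* Eigenvalues with multiplicity: the roots of the characteristic polynomial. *)
Definition spectrum N (A : 'M[algC]_N) : seq algC :=
  sval (closed_field_poly_normal (char_poly A)).

Lemma spectrumP N (A : 'M[algC]_N) :
  char_poly A = \prod_(z <- spectrum A) ('X - z%:P).
Proof.
rewrite /spectrum; case: closed_field_poly_normal => r /= {1}->.
by rewrite (monicP (char_poly_monic A)) scale1r.
Qed.

Definition energy N (adj : rel 'I_N) : algC :=
  \sum_(z <- spectrum (adjmx adj)) `|z|.

Definition isospectral N (adj1 adj2 : rel 'I_N) : Prop :=
  perm_eq (spectrum (adjmx adj1)) (spectrum (adjmx adj2)).

From HB Require Import structures.
From mathcomp Require Import all_boot all_order all_algebra all_field.
From mathcomp Require Import spectral.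
From mathcomp Require Import zify ring lra.
Set Implicit Arguments. Unset Strict Implicit. Unset Printing Implicit Defensive.
Import Order.TTheory GRing.Theory Num.Theory.
Local Open Scope ring_scope.

(* The adjacency matrix A of a strongly regular graph satisfies
   A^2 = (k - d) I + (e - d) A + d J and AJ = JA = kJ, and its complement J - I - A
   satisfies an identity of the same shape.  Hence the spectrum of the graph lies in
   {k, r, s}, where r >= 0 > s are the roots of x^2 - (e - d) x - (k - d), and that of
   the complement in {N - 1 - k, -1 - s, -1 - r}; the traces of A and A^2 fix the first
   two power sums.  A sequence supported on three points is determined up to permutation
   by its length and these two power sums, and on three such points |z| agrees with a
   quadratic, so both energies are explicit: they coincide iff
   (N - 1 - k) s + k (1 + r) = 0, and then the graphs are isospectral iff N - 1 - k = k.
   Otherwise the balance equation makes s rational, hence an integer since it is an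
   algebraic integer; writing s = -m and r = n - m, the relation
   k (k - e - 1) = d (N - 1 - k) forces the OA(n, m) parameters.  Conversely, OA
   parameters give r = n - m and s = -m, which satisfy the balance, while
   N - 1 - k <> k because 2 m <> n + 1. *)

Section ThreeValuedSequences.

Variable R : numFieldType.
Implicit Types (S : seq R) (a b c : R).

Definition lagrange3 a b c (z : R) : R := (z - b) * (z - c) / ((a - b) * (a - c)).

Lemma sumr_const_seq S c : \sum_(z <- S) c = (size S)%:R * c.
Proof. by rewrite -[c in LHS]mul1r -mulr_suml -sum1_size natr_sum. Qed.

Lemma sum_lagrange3 S a b c :
  \sum_(z <- S) lagrange3 a b c z =
  (\sum_(z <- S) z ^+ 2 - (b + c) * \sum_(z <- S) z + (size S)%:R * (b * c))
    / ((a - b) * (a - c)).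
Proof.
rewrite -mulr_suml; congr (_ / _).
transitivity (\sum_(z <- S) (z ^+ 2 - (b + c) * z + b * c)).
  by apply: eq_bigr => z _; ring.
by rewrite !big_split /= sumrN -mulr_sumr sumr_const_seq.
Qed.

Lemma sum_three_valued S a b c (f : R -> R) :
  a != b -> a != c -> b != c -> {subset S <= [:: a; b; c]} ->
  \sum_(z <- S) f z = f a * \sum_(z <- S) lagrange3 a b c z
    + f b * \sum_(z <- S) lagrange3 b c a z + f c * \sum_(z <- S) lagrange3 c a b z.
Proof.
move=> ab ac bc sub; rewrite !mulr_sumr -!big_split /=.
apply: eq_big_seq => z /sub; rewrite /lagrange3 !inE.
have ba : b != a by rewrite eq_sym.
have ca : c != a by rewrite eq_sym.
have cb : c != b by rewrite eq_sym.
by case/or3P => /eqP ->; field; rewrite !subr_eq0 ab ac bc ba ca cb.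
Qed.

Lemma perm_eq_three_valued S1 S2 a b c :
  a != b -> a != c -> b != c ->
  {subset S1 <= [:: a; b; c]} -> {subset S2 <= [:: a; b; c]} ->
  size S1 = size S2 -> \sum_(z <- S1) z = \sum_(z <- S2) z ->
  \sum_(z <- S1) z ^+ 2 = \sum_(z <- S2) z ^+ 2 -> perm_eq S1 S2.
Proof.
move=> ab ac bc sub1 sub2 size12 sum12 sqr12.
have countE S x : (count_mem x S)%:R = \sum_(z <- S) ((z == x)%:R : R).
  by rewrite -sum1_count natr_sum big_mkcond; apply: eq_bigr => z _ /=; case: (z == x).
apply/allP => x _; rewrite /= -(eqr_nat R) !countE.
rewrite !(sum_three_valued (fun z => ((z == x)%:R : R)) ab ac bc) //.
by rewrite !sum_lagrange3 size12 sum12 sqr12.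
Qed.

Lemma sum_norm_three_valued S K r s :
  {subset S <= [:: K; r; s]} -> 0 <= K -> 0 <= r -> s < 0 ->
  \sum_(z <- S) z = 0 -> \sum_(z <- S) z ^+ 2 = (size S)%:R * K ->
  \sum_(z <- S) `|z| = -2 * s * (size S)%:R * K * (1 + r) / ((s - K) * (s - r)).
Proof.
move=> sub K_ge0 r_ge0 s_lt0 sum0 sqr.
have sK : s - K != 0 by rewrite subr_eq0 (lt_eqF (lt_le_trans s_lt0 K_ge0)).
have sr : s - r != 0 by rewrite subr_eq0 (lt_eqF (lt_le_trans s_lt0 r_ge0)).
(* [|z|] is the quadratic that is [z] at [K] and [r], and [-z] at [s]. *)
have normE : {in S, forall z, `|z| = z - 2 * s * lagrange3 s K r z}.
  move=> z /sub; rewrite /lagrange3 !inE.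
  by case/or3P => /eqP ->; rewrite ?(ger0_norm K_ge0, ger0_norm r_ge0, ltr0_norm s_lt0);
    field; apply/andP.
rewrite (eq_big_seq _ normE) sumrB -mulr_sumr sum_lagrange3 sum0 sqr.
by field; apply/andP.
Qed.

End ThreeValuedSequences.

Lemma char_poly_conj (R : comUnitRingType) n (P M : 'M[R]_n) : P \in unitmx ->
  char_poly (P *m M *m invmx P) = char_poly M.
Proof.
move=> P_unit; rewrite /char_poly.
set P' := map_mx polyC P; set Q' := map_mx polyC (invmx P).
have PQ : P' *m Q' = 1%:M by rewrite -map_mxM mulmxV // map_mx1.
have -> : char_poly_mx (P *m M *m invmx P) = P' *m char_poly_mx M *m Q'.
  rewrite /char_poly_mx !map_mxM -/P' -/Q' mulmxBr mulmxBl.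
  by rewrite mul_mx_scalar -scalemxAl PQ scalemx1.
by rewrite !det_mulmx mulrC mulrA -det_mulmx (mulmx1C PQ) det1 mul1r.
Qed.

Lemma trig_mulmx_diag (R : pzSemiRingType) n (A B : 'M[R]_n) i :
  is_trig_mx A -> is_trig_mx B -> (A *m B) i i = A i i * B i i.
Proof.
move=> /is_trig_mxP A_trig /is_trig_mxP B_trig.
rewrite mxE (bigD1 i) //= big1 ?addr0 // => j /negbTE j_neq_i.
have [lt_ij|lt_ji|/val_inj eq_ij] := ltngtP i j; last by rewrite eq_ij eqxx in j_neq_i.
- by rewrite A_trig ?mul0r.
- by rewrite B_trig ?mulr0.
Qed.

Lemma size_spectrum n (M : 'M[algC]_n) : size (spectrum M) = n.
Proof. by have := size_char_poly M; rewrite spectrumP size_prod_XsubC => -[]. Qed.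

Lemma perm_spectrum_trig n (P M : 'M[algC]_n) : P \in unitmx ->
  is_trig_mx (P *m M *m invmx P) ->
  perm_eq (spectrum M) [seq (P *m M *m invmx P) i i | i <- enum 'I_n].
Proof.
move=> P_unit T_trig; apply: prod_XsubC_eq.
by rewrite -spectrumP -(char_poly_conj M P_unit) char_poly_trig // big_map big_enum.
Qed.

Lemma spectrum_trace n (M : 'M[algC]_n.+1) :
  \sum_(z <- spectrum M) z = \tr M /\
  \sum_(z <- spectrum M) z ^+ 2 = \tr (M *m M).
Proof.
have [P P_unitary] := Schur M (ltn0Sn n).
have P_unit := unitarymx_unit P_unitary.
rewrite /similar_to conjumx // => T_trig.
have trT X : \tr (P *m X *m invmx P) = \tr X.
  by rewrite mxtrace_mulC mulmxA mulVmx // mul1mx.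
have sum_diag (f : algC -> algC) :
    \sum_(z <- spectrum M) f z = \sum_(i < n.+1) f ((P *m M *m invmx P) i i).
  by rewrite (perm_big _ (perm_spectrum_trig P_unit T_trig)) big_map big_enum.
rewrite !sum_diag; split; first exact: trT.
have sqrT : (P *m M *m invmx P) *m (P *m M *m invmx P) = P *m (M *m M) *m invmx P.
  by rewrite !mulmxA mulmxKV.
rewrite -trT -sqrT; apply: eq_bigr => i _.
by rewrite [RHS]trig_mulmx_diag.
Qed.

Lemma spectrum_sub_annihilator n (M : 'M[algC]_n.+1) (s : seq algC) :
  horner_mx M (\prod_(a <- s) ('X - a%:P)) = 0 -> {subset spectrum M <= s}.
Proof.
move=> annihilates z zM; rewrite -root_prod_XsubC.
apply: root_dvdp (mxminpoly_min annihilates) _.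
by rewrite root_mxminpoly spectrumP root_prod_XsubC.
Qed.

Section StronglyRegularMatrix.

Variable n : nat.
Local Notation J := (const_mx 1 : 'M[algC]_n).

Definition srg_matrix (A : 'M[algC]_n) (K t q : algC) :=
  [/\ A *m J = K *: J, J *m A = K *: J, \tr A = 0
    & A *m A = q%:M + t *: A + (K - q) *: J].

Lemma mulmx_const1 : J *m J = n%:R *: J.
Proof.
apply/matrixP => i j; rewrite !mxE (eq_bigr (fun=> 1)) => [|l _]; last by rewrite !mxE mulr1.
by rewrite sumr_const card_ord mulr1.
Qed.

Lemma mxtrace_const1 : \tr J = n%:R.
Proof. by rewrite /mxtrace (eq_bigr (fun=> 1)) ?sumr_const ?card_ord // => i; rewrite mxE. Qed.

Lemma srg_matrix_complement A K t q : srg_matrix A K t q ->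
  srg_matrix (J - 1%:M - A) (n%:R - 1 - K) (-2 - t) (q - t - 1).
Proof.
case=> AJ JA trA AA; split.
- by rewrite !mulmxBl mulmx_const1 mul1mx AJ !scalerBl scale1r.
- by rewrite !mulmxBr mulmx_const1 mulmx1 JA !scalerBl scale1r.
- by rewrite !mxtraceD !raddfN /= mxtrace_const1 mxtrace1 trA subrr subr0.
- rewrite !mulmxBl !mulmxBr !mul1mx !mulmx1 mulmx_const1 AJ JA AA.
  by apply/matrixP => i j; rewrite !mxE; ring.
Qed.

Lemma srg_matrix_annihilator A K t q r s : srg_matrix A K t q ->
  r + s = t -> r * s = - q -> (A - r%:M) *m (A - s%:M) *m (A - K%:M) = 0.
Proof.
case=> AJ JA _ AA rs_sum rs_prod.
have -> : (A - r%:M) *m (A - s%:M) = (K - q) *: J.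
  rewrite mulmxBl !mulmxBr AA mul_mx_scalar !mul_scalar_mx -rs_sum -[q]opprK -rs_prod.
  by apply/matrixP => i j; rewrite !mxE; ring.
by rewrite -scalemxAl mulmxBr JA mul_mx_scalar subrr scaler0.
Qed.

End StronglyRegularMatrix.

Lemma srg_matrix_spectrum n (A : 'M[algC]_n.+1) K t q r s :
  srg_matrix A K t q -> r + s = t -> r * s = - q ->
  [/\ {subset spectrum A <= [:: K; r; s]}, \sum_(z <- spectrum A) z = 0
    & \sum_(z <- spectrum A) z ^+ 2 = n.+1%:R * K].
Proof.
move=> srgA rs_sum rs_prod; have [_ _ trA AA] := srgA.
have [-> ->] := spectrum_trace A; split=> //.
- apply: spectrum_sub_annihilator.
  rewrite !big_cons big_nil mulr1 mulrC !rmorphM !rmorphB /=.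
  by rewrite horner_mx_X !horner_mx_C -!mulmxE (srg_matrix_annihilator srgA).
- by rewrite AA !mxtraceD !mxtraceZ mxtrace_scalar trA mxtrace_const1; ring.
Qed.

Lemma srg_matrix_param_eq n (A : 'M[algC]_n.+1) K t q : srg_matrix A K t q ->
  K ^+ 2 = q + t * K + (K - q) * n.+1%:R.
Proof.
case=> AJ _ _ AA.
have : (A *m A) *m const_mx 1 = K ^+ 2 *: (const_mx 1 : 'M_n.+1).
  by rewrite -mulmxA AJ -scalemxAr AJ scalerA -expr2.
rewrite AA !mulmxDl mul_scalar_mx -!scalemxAl AJ mulmx_const1 => /matrixP/(_ 0 0).
by rewrite !mxE /= !mulr1 => <-.
Qed.

Lemma srg_matrix_energy n (A : 'M[algC]_n.+1) K t q r s :
  srg_matrix A K t q -> r + s = t -> r * s = - q -> 0 <= K -> 0 <= r -> s < 0 ->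
  \sum_(z <- spectrum A) `|z| = -2 * s * n.+1%:R * K * (1 + r) / ((s - K) * (s - r)).
Proof.
move=> srgA rs_sum rs_prod K_ge0 r_ge0 s_lt0.
have [sub sum0 sqr] := srg_matrix_spectrum srgA rs_sum rs_prod.
rewrite -[in n.+1%:R](size_spectrum A) in sqr *.
exact: sum_norm_three_valued.
Qed.

(* The two sides are the energy formula of [srg_matrix_energy] for a graph with
   restricted eigenvalues [r], [s] and for its complement. *)
Lemma energy_balance (R : numFieldType) (N K Kc r s : R) :
  N != 0 -> 0 <= K -> 0 <= Kc -> 0 <= r -> s < 0 ->
  -2 * s * N * K * (1 + r) / ((s - K) * (s - r)) =
  -2 * (-1 - r) * N * Kc * (1 + (-1 - s)) / ((-1 - r - Kc) * (-1 - r - (-1 - s)))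
  <-> Kc * s + K * (1 + r) = 0.
Proof.
move=> N_neq0 K_ge0 Kc_ge0 r_ge0 s_lt0.
have r1_gt0 : 0 < 1 + r by rewrite ltr_pwDl.
have s_neq0 : s != 0 by rewrite lt_eqF.
have sK : s - K != 0 by rewrite subr_eq0 (lt_eqF (lt_le_trans s_lt0 K_ge0)).
have sr : s - r != 0 by rewrite subr_eq0 (lt_eqF (lt_le_trans s_lt0 r_ge0)).
have rKc : -1 - r - Kc != 0 by rewrite -!opprD oppr_eq0 gt_eqF // ltr_wpDr.
rewrite (rwP eqP) -subr_eq0; set D := (X in X == 0).
set C := 2 * s * N * (1 + r) / ((s - r) * (s - K) * (-1 - r - Kc)).
have C_neq0 : C != 0.
  by rewrite /C !mulf_neq0 ?invr_eq0 ?mulf_neq0 ?pnatr_eq0 ?(gt_eqF r1_gt0).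
have -> : D = C * (Kc * s + K * (1 + r)) by rewrite /D /C; field; rewrite sK sr rKc.
by rewrite mulf_eq0 (negbTE C_neq0); split=> /eqP.
Qed.

Lemma sum_indicator_card N (P : pred 'I_N) : \sum_(l < N) ((P l)%:R : algC) = #|P|%:R.
Proof.
rewrite -sum1_card natr_sum [RHS]big_mkcond /=; apply: eq_bigr => l _.
by rewrite unfold_in; case: (P l).
Qed.

Lemma adjmx_complement N (adj : rel 'I_N) : simple_graph adj ->
  adjmx (complement adj) = const_mx 1 - 1%:M - adjmx adj.
Proof.
case=> _ irr; apply/matrixP => i j; rewrite !mxE /complement.
have [<-|_] := eqVneq i j; first by rewrite (negbTE (irr i)) /= subr0 subrr.
by case: (adj i j); rewrite /= !subr0 ?subrr.
Qed.

Lemma adjmx_srg_matrix N (adj : rel 'I_N) k e d : srg adj k e d ->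
  srg_matrix (adjmx adj) k%:R (e%:R - d%:R) (k%:R - d%:R).
Proof.
case=> [[sym irr] [deg _ _ adjE nadjE]]; split.
- apply/matrixP => i j; rewrite !mxE.
  under eq_bigr do rewrite !mxE mulr1.
  by rewrite sum_indicator_card -(deg i) cardsE mulr1.
- apply/matrixP => i j; rewrite !mxE.
  under eq_bigr do rewrite !mxE mul1r sym.
  by rewrite sum_indicator_card -(deg j) cardsE mulr1.
- by rewrite /mxtrace big1 // => i _; rewrite mxE (negbTE (irr i)).
- apply/matrixP => i j; rewrite !mxE.
  under eq_bigr do rewrite !mxE -natrM mulnb [adj _ j]sym.
  rewrite sum_indicator_card -cardsE -/(common_nbrs adj i j).
  have [<-|ij] := eqVneq i j.
    rewrite (negbTE (irr i)) /common_nbrs.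
    by under eq_finset do rewrite andbb; rewrite deg /= mulr1n; ring.
  have [aij|naij] := boolP (adj i j).
    by rewrite adjE //= mulr0n mulr1n; ring.
  by rewrite nadjE //= !mulr0n; ring.
Qed.

Lemma complement_srg_matrix n (adj : rel 'I_n) k e d : srg adj k e d ->
  srg_matrix (adjmx (complement adj)) (n%:R - 1 - k%:R)
    (-2 - (e%:R - d%:R)) (k%:R - d%:R - (e%:R - d%:R) - 1).
Proof.
move=> srgG; have [simple _] := srgG.
by rewrite adjmx_complement //; apply/srg_matrix_complement/adjmx_srg_matrix.
Qed.

Lemma srg_bounds N (adj : rel 'I_N) k e d : srg adj k e d ->
  [/\ (0 < k)%N, (k.+2 <= N)%N, (e < k)%N & (d <= k)%N].
Proof.
case=> [[_ irr] [deg [u [v [uv nuv]]] [x [y xy]] adjE nadjE]]; split.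
- by rewrite -(deg x); apply/card_gt0P; exists y; rewrite inE.
- have : [set w | adj u w] \subset ~: [set u; v].
    apply/subsetP => w; rewrite !inE; apply: contraL => /orP[] /eqP -> //.
  move/subset_leq_card; rewrite deg => k_le.
  by have := cardsC [set u; v]; rewrite cards2 uv card_ord; lia.
- have : [set w | adj x w && adj y w] \subset [set w | adj x w] :\ y.
    apply/subsetP => w; rewrite !inE => /andP[-> yw]; rewrite andbT.
    by apply: contraTneq yw => ->.
  move/subset_leq_card; rewrite -/(common_nbrs adj x y) adjE // => e_le.
  by have := cardsD1 y [set w | adj x w]; rewrite inE xy deg; lia.
- have : [set w | adj u w && adj v w] \subset [set w | adj u w].
    by apply/subsetP => w; rewrite !inE => /andP[].
  by move/subset_leq_card; rewrite -/(common_nbrs adj u v) nadjE // deg.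
Qed.

Lemma quadratic_roots_sign (R : rcfType) (t q : R) : 0 <= q -> t + 1 <= q ->
  exists r s : R, [/\ r + s = t, r * s = - q, 0 <= r & s <= -1].
Proof.
move=> q_ge0 tq; set D := t ^+ 2 + 4 * q.
have D_ge0 : 0 <= D by rewrite /D; nra.
have sqrtD_ge0 : 0 <= Num.sqrt D := sqrtr_ge0 D.
have sqrtD2 : Num.sqrt D ^+ 2 = D := sqr_sqrtr D_ge0.
exists ((t + Num.sqrt D) / 2), ((t - Num.sqrt D) / 2); rewrite /D in sqrtD2.
split; [by field | nra | nra | nra].
Qed.

Definition restricted_eigenvalues (k e d : nat) (r s : algC) :=
  [/\ r + s = e%:R - d%:R, r * s = d%:R - k%:R, 0 <= r & s <= -1].

Lemma exists_restricted_eigenvalues k e d : (e < k)%N -> (d <= k)%N ->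
  exists r s, restricted_eigenvalues k e d r s.
Proof.
move=> ek dk.
have q_ge0 : 0 <= (k%:R - d%:R : algR) by rewrite subr_ge0 ler_nat.
have tq : (e%:R - d%:R) + 1 <= (k%:R - d%:R : algR).
  have : (e.+1%:R <= k%:R :> algR) by rewrite ler_nat.
  rewrite -natr1; lra.
have [r [s [rs_sum rs_prod r_ge0 s_le]]] := quadratic_roots_sign q_ge0 tq.
exists (algRval r), (algRval s); split=> //.
- by rewrite -rmorphD rs_sum rmorphB !rmorph_nat.
- by rewrite -rmorphM rs_prod rmorphN rmorphB !rmorph_nat opprB.
Qed.

Definition oa_parameters (N k e d : nat) :=
  exists n m : nat, [/\ (0 < n)%N, (0 < m)%N, m != n.+1, (2 * m)%N != n.+1
     & [/\ (N%:Z = (n%:Z) ^+ 2), (k%:Z = m%:Z * (n%:Z - 1)),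
           (e%:Z = m%:Z ^+ 2 - 3 * m%:Z + n%:Z) & (d%:Z = m%:Z * (m%:Z - 1))]].

Lemma oa_of_balance (N k e d : nat) (r s : int) :
  (0 < k)%N -> 0 <= r -> s <= -1 ->
  r + s = e%:Z - d%:Z -> r * s = d%:Z - k%:Z ->
  k%:Z * (k%:Z - e%:Z - 1) = d%:Z * (N%:Z - 1 - k%:Z) ->
  (N%:Z - 1 - k%:Z) * s + k%:Z * (1 + r) = 0 -> N%:Z - 1 - k%:Z != k%:Z ->
  oa_parameters N k e d.
Proof.
move=> k_gt0 r_ge0 s_le rs_sum rs_prod param balance Kc_neq.
have [m sE] : exists m : nat, s = - m%:Z by exists (absz s); lia.
have [n rE] : exists n : nat, r = n%:Z - m%:Z by exists (absz (r + m%:Z)); lia.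
subst r s.
have e_eq : e%:Z = d%:Z + n%:Z - 2 * m%:Z by lia.
have k_eq : k%:Z = d%:Z + m%:Z * (n%:Z - m%:Z) by lia.
have balance' : m%:Z * (N%:Z - 1 - k%:Z) = k%:Z * (n%:Z + 1 - m%:Z) by lia.
have kef : k%:Z - e%:Z - 1 = (m%:Z - 1) * (n%:Z - m%:Z + 1) by rewrite k_eq e_eq; ring.
have /eqP : k%:Z * (n%:Z + 1 - m%:Z) * (d%:Z - m%:Z * (m%:Z - 1)) = 0.
  transitivity (d%:Z * (m%:Z * (N%:Z - 1 - k%:Z)) - m%:Z * (k%:Z * (k%:Z - e%:Z - 1))).
    by rewrite balance' kef; ring.
  by rewrite param; ring.
have Kn_neq0 : k%:Z * (n%:Z + 1 - m%:Z) != 0 by rewrite mulf_neq0 //; lia.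
rewrite mulf_eq0 (negbTE Kn_neq0) subr_eq0 => /eqP d_eq.
have k_eq' : k%:Z = m%:Z * (n%:Z - 1) by rewrite k_eq d_eq; ring.
have Kc_eq : N%:Z - 1 - k%:Z = (n%:Z - 1) * (n%:Z + 1 - m%:Z).
  by apply: (@mulfI _ m%:Z); [lia | rewrite balance' k_eq'; ring].
exists n, m; split; [lia | lia | lia | | split => //].
- apply: contra Kc_neq => /eqP two_m; apply/eqP.
  by rewrite Kc_eq k_eq'; nia.
- nia.
- nia.
Qed.

Lemma oa_parameters_bounds (N k n m : nat) :
  (k.+2 <= N)%N -> m != n.+1 -> (2 * m)%N != n.+1 ->
  N%:Z = n%:Z ^+ 2 -> k%:Z = m%:Z * (n%:Z - 1) ->
  (m <= n)%N /\ N%:Z - 1 - k%:Z != k%:Z.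
Proof.
move=> kN m_neq two_m_neq NE kE.
have n_ge2 : (2 <= n)%N by nia.
split; first by nia.
apply/eqP => Kc_eq.
have : (n%:Z - 1) * (2 * m%:Z - n%:Z - 1) = 0 by nia.
by move/eqP; rewrite mulf_eq0 => /orP[] /eqP; lia.
Qed.

Lemma Crat_root_int (r s : algC) (t q : int) :
  r + s = t%:~R -> r * s = q%:~R -> s \in Crat -> s \in Num.int.
Proof.
move=> rs_sum rs_prod s_rat; apply: Cint_rat_Aint => //.
(* [Num.int_num_subdef] is the predicate behind [Num.int] carrying the closure instances. *)
have p_int : ('X - r%:P) * ('X - s%:P) \is a polyOver Num.int_num_subdef.
  rewrite (_ : _ * _ = 'X^2 - (t%:~R)%:P * 'X + (q%:~R)%:P).
    by rewrite rpredD ?rpredB ?rpredM ?rpredX ?polyOverX ?polyOverC ?rpred_int.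
  by rewrite -rs_sum -rs_prod !rmorphD !rmorphM /=; ring.
apply: (root_monic_Aint _ _ p_int); last by rewrite monicMl ?monicXsubC.
by rewrite rootM !root_XsubC eqxx orbT.
Qed.

Section StronglyRegularGraph.

Variables (N : nat) (adj : rel 'I_N.+1) (k e d : nat) (r s : algC).
Hypothesis srgG : srg adj k e d.
Hypothesis rs : restricted_eigenvalues k e d r s.

Local Notation K := (k%:R : algC).
Local Notation Kc := (N.+1%:R - 1 - k%:R : algC).

Let rs_sum : r + s = e%:R - d%:R. Proof. by case: rs. Qed.
Let rs_prod : r * s = d%:R - k%:R. Proof. by case: rs. Qed.
Let r_ge0 : 0 <= r. Proof. by case: rs. Qed.
Let s_le : s <= -1. Proof. by case: rs. Qed.
Let s_lt0 : s < 0. Proof. exact: le_lt_trans s_le (ltrN10 _). Qed.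
Let rs_prodN : r * s = - (K - d%:R). Proof. by rewrite rs_prod opprB. Qed.
Let rsc_sum : (-1 - s) + (-1 - r) = -2 - (e%:R - d%:R).
Proof. by transitivity (-2 - (r + s)); [ring | rewrite rs_sum]. Qed.
Let rsc_prod : (-1 - s) * (-1 - r) = - (K - d%:R - (e%:R - d%:R) - 1).
Proof. by transitivity (1 + (r + s) + r * s); [ring | rewrite rs_sum rs_prod; ring]. Qed.

Lemma srg_energy_complement : (k <= N)%N ->
  energy adj = energy (complement adj) <-> Kc * s + K * (1 + r) = 0.
Proof.
move=> kn.
have Kc_ge0 : 0 <= Kc by rewrite -natr1 addrK subr_ge0 ler_nat.
have rc_ge0 : 0 <= -1 - s by rewrite subr_ge0.
have sc_lt0 : -1 - r < 0 by rewrite subr_lt0 (lt_le_trans (ltrN10 _)).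
rewrite /energy.
rewrite (srg_matrix_energy (adjmx_srg_matrix srgG) rs_sum rs_prodN (ler0n _ _) r_ge0 s_lt0).
rewrite (srg_matrix_energy (complement_srg_matrix srgG) rsc_sum rsc_prod Kc_ge0 rc_ge0 sc_lt0).
by apply: energy_balance; rewrite ?pnatr_eq0 ?ler0n.
Qed.

Lemma srg_isospectral_complement : (0 < k)%N -> Kc * s + K * (1 + r) = 0 ->
  isospectral adj (complement adj) <-> Kc = K.
Proof.
move=> k_gt0 balance.
have [subA sumA sqrA] := srg_matrix_spectrum (adjmx_srg_matrix srgG) rs_sum rs_prodN.
have [subB sumB sqrB] := srg_matrix_spectrum (complement_srg_matrix srgG) rsc_sum rsc_prod.
have N_neq0 : N.+1%:R != 0 :> algC by rewrite pnatr_eq0.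
split=> [iso | Kc_K].
  have : \sum_(z <- spectrum (adjmx adj)) z ^+ 2 =
         \sum_(z <- spectrum (adjmx (complement adj))) z ^+ 2 by apply: perm_big.
  by rewrite sqrA sqrB => /(mulfI N_neq0)/esym.
have K_neq0 : K != 0 by rewrite pnatr_eq0 -lt0n.
have /eqP : K * (r + s + 1) = 0 by rewrite -balance Kc_K; ring.
rewrite mulf_eq0 (negbTE K_neq0) addr_eq0 => /eqP rs_sum1.
have rE : -1 - s = r by rewrite -rs_sum1; ring.
have sE : -1 - r = s by rewrite -rs_sum1; ring.
rewrite Kc_K rE sE in subB sumB sqrB.
apply: (perm_eq_three_valued (a := K) (b := r) (c := s)) => //.
- (* [r = k] would force [k^2 + d = 0]. *)
  apply/eqP => K_r.
  have : (k * k + d)%:R = - (r * s - (d%:R - K)) :> algC.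
    by rewrite -sE -K_r natrD natrM; ring.
  by rewrite rs_prod subrr oppr0 => /eqP; rewrite pnatr_eq0 addn_eq0 muln_eq0 orbb gtn_eqF.
- by rewrite eq_sym lt_eqF // (lt_le_trans s_lt0).
- by rewrite eq_sym lt_eqF // (lt_le_trans s_lt0).
- by rewrite !size_spectrum.
- by rewrite sumA sumB.
- by rewrite sqrA sqrB.
Qed.

Lemma srg_param_eq : K * (K - e%:R - 1) = d%:R * Kc.
Proof.
have := srg_matrix_param_eq (adjmx_srg_matrix srgG).
by move/eqP; rewrite -subr_eq0 => /eqP param; rewrite -[RHS]addr0 -param; ring.
Qed.

Lemma srg_eigenvalue_int : Kc * s + K * (1 + r) = 0 -> Kc != K -> s \in Num.int.
Proof.
move=> balance Kc_neq.
apply: (Crat_root_int (r := r) (t := e%:Z - d%:Z) (q := d%:Z - k%:Z)).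
- by rewrite rs_sum rmorphB.
- by rewrite rs_prod rmorphB.
have KcK : Kc - K != 0 by rewrite subr_eq0.
have /eqP : s * (Kc - K) - - K * (1 + (e%:R - d%:R)) = 0 by rewrite -balance -rs_sum; ring.
rewrite subr_eq0 => /eqP/(canRL (mulfK KcK)) ->.
by rewrite rpred_div ?(rpredM, rpredB, rpredN, rpredD, rpred_nat, rpred1).
Qed.

Lemma srg_oa_parameters_of_balance : (0 < k)%N ->
  Kc * s + K * (1 + r) = 0 -> Kc != K -> oa_parameters N.+1 k e d.
Proof.
move=> k_gt0 balance Kc_neq.
have sZ := srg_eigenvalue_int balance Kc_neq.
have rZ : r \in Num.int by rewrite -[r](addrK s) rs_sum ?(rpredB, rpred_nat).
have [ri rE] := intrP rZ; have [si sE] := intrP sZ.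
apply: (oa_of_balance (r := ri) (s := si)) => //.
- by move: r_ge0; rewrite rE ler0z.
- by rewrite -(ler_int algC) -sE.
- by apply: (@intr_inj algC); rewrite intrD !intrB -rE -sE rs_sum.
- by apply: (@intr_inj algC); rewrite intrM !intrB -rE -sE rs_prod.
- by apply: (@intr_inj algC); rewrite !intrM !intrB srg_param_eq.
- by apply: (@intr_inj algC); rewrite intrD !intrM !intrB intrD -rE -sE balance.
- by rewrite -(eqr_int algC) !intrB.
Qed.

Lemma balance_of_oa_parameters : (k.+2 <= N.+1)%N ->
  oa_parameters N.+1 k e d -> Kc * s + K * (1 + r) = 0 /\ Kc != K.
Proof.
move=> kN [n [m [_ _ m_neq two_m_neq [NE kE eE dE]]]].
have [m_le Kc_neq] := oa_parameters_bounds kN m_neq two_m_neq NE kE.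
have toC (x y : int) : x = y -> x%:~R = y%:~R :> algC by move->.
have NC : N.+1%:R = n%:R ^+ 2 :> algC by move/toC: NE; rewrite rmorphXn.
have kC : K = m%:R * (n%:R - 1) by move/toC: kE; rewrite intrM intrB.
have eC : e%:R = m%:R ^+ 2 - 3 * m%:R + n%:R :> algC.
  by move/toC: eE; rewrite intrD intrB rmorphXn intrM.
have dC : d%:R = m%:R * (m%:R - 1) :> algC by move/toC: dE; rewrite intrM intrB.
have rE : r = e%:R - d%:R - s by rewrite -rs_sum addrK.
have /eqP : (n%:R - m%:R - s) * (s + m%:R) = 0.
  by rewrite -(subrr (r * s)) {2}rs_prod rE eC dC kC; ring.
rewrite mulf_eq0 => /orP[|].
  by rewrite subr_eq0 -natrB // => /eqP sE; move: s_lt0; rewrite -sE ltrn0.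
rewrite addr_eq0 => /eqP sE; split; first by rewrite rE sE NC kC eC dC; ring.
by move: Kc_neq; rewrite -(eqr_int algC) !intrB.
Qed.

End StronglyRegularGraph.

Unset Implicit Arguments.

Theorem mainTheorem14 (N : nat) (adj : rel 'I_N) (k e d : nat) :
  srg adj k e d ->
  ((energy adj = energy (complement adj) /\ ~ isospectral adj (complement adj))
   <->
   exists n m : nat, [/\ (0 < n)%N, (0 < m)%N, m != n.+1, (2 * m)%N != n.+1
     & [/\ (N%:Z = (n%:Z) ^+ 2), (k%:Z = m%:Z * (n%:Z - 1)),
           (e%:Z = m%:Z ^+ 2 - 3 * m%:Z + n%:Z) & (d%:Z = m%:Z * (m%:Z - 1))]]).
Proof.
move=> srgG; have [k_gt0 kN ek dk] := srg_bounds srgG.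
case: N adj srgG kN => [//|N] adj srgG kN.
have [r [s rs]] := exists_restricted_eigenvalues ek dk.
rewrite (srg_energy_complement srgG rs (ltnW kN)).
have iso := srg_isospectral_complement srgG rs k_gt0.
split=> [[balance not_iso] | oa].
  apply: (srg_oa_parameters_of_balance srgG rs k_gt0 balance).
  by apply/eqP; rewrite -(iso balance).
have [balance Kc_neq] := balance_of_oa_parameters rs kN oa.
by split=> //; rewrite (iso balance); apply/eqP.
Qed.
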